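(* Let $k$ be an integer and $\mathcal{H}$ a hypergraph on $n$ vertices. Then $Tr(\hat{\mathcal{H}}_{k})=\{T\cup\{x\}\mid T\in Tr(\mathcal{H}),\ |T|<n-k+1\}\cup\mathcal{J}$, where $\mathcal{J}$ contains only sets of size at least $n-k+1$.
   Context: For a hypergraph $\mathcal{H}$ with vertex set $V(\mathcal{H})$ ($|V(\mathcal{H})|=n$) and hyperedge set $\mathcal{E}(\mathcal{H})$, $\hat{\mathcal{H}}_{k}$ is the hypergraph with vertex set $V(\mathcal{H})\cup\{x\}$, $x$ a new vertex, and hyperedge set $\mathcal{E}(\mathcal{H})\cup\{X\cup\{x\}\mid X\subseteq V(\mathcal{H}),\ |X|=k\}$. $Tr(\cdot)$ denotes the hypergraph of inclusion-minimal transversals (vertex sets meeting every hyperedge). *)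

From mathcomp Require Import all_boot.
Set Implicit Arguments. Unset Strict Implicit. Unset Printing Implicit Defensive.

Definition is_transversal (T : finType) (E : {set {set T}}) (S : {set T}) : bool :=
  [forall e in E, e :&: S != set0].

Definition Tr (T : finType) (E : {set {set T}}) : {set {set T}} :=
  [set S | minset (is_transversal E) S].

(* hat H_k on vertex set option T, the new vertex x being None *)
Definition hatH (T : finType) (E : {set {set T}}) (k : nat) : {set {set option T}} :=
  [set (@Some T) @: e | e : {set T} in E] :|:
  [set ((@Some T) @: X) :|: [set None] | X : {set T} in [set X : {set T} | #|X| == k]].

From mathcomp Require Import all_boot.
(* Imported last so that its is_transversal shadows the one of finset. *)
Set Implicit Arguments. Unset Strict Implicit. Unset Printing Implicit Defensive.

(* A set S of vertices of hat H_k is a transversal iff S \ {x} is a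
   transversal of H and either x is in S or S \ {x} meets every k-subset of
   V, i.e. |S \ {x}| >= n - k + 1.  Hence a transversal S with
   |S \ {x}| <= n - k contains x, and for |A| <= n - k the transversals of
   hat H_k inside A u {x} are exactly the C u {x} with C a transversal of H
   inside A; so A u {x} is minimal for hat H_k iff A is minimal for H. *)

Section Transversals.

Variable T : finType.

Lemma is_transversalU (F G : {set {set T}}) (S : {set T}) :
  is_transversal (F :|: G) S = is_transversal F S && is_transversal G S.
Proof.
apply/forall_inP/andP => [meetFG | [/forall_inP meetF /forall_inP meetG] e].
  by split; apply/forall_inP => e eF; apply: meetFG; rewrite inE eF ?orbT.
by rewrite inE => /orP[/meetF | /meetG].
Qed.

Lemma is_transversal_imset (aT : finType) (f : aT -> {set T}) (D : {set aT})
    (S : {set T}) :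
  is_transversal (f @: D) S = [forall d in D, f d :&: S != set0].
Proof.
apply/forall_inP/forall_inP => [meet d dD | meet _ /imsetP[d dD ->]].
  by apply: meet; rewrite imset_f.
exact: meet.
Qed.

Lemma exists_subset_card (A : {set T}) m :
  m <= #|A| -> exists2 X : {set T}, X \subset A & #|X| = m.
Proof.
case/card_geqP => s [s_uniq s_size sA]; exists [set x in s].
  by apply/subsetP => x; rewrite inE => /sA.
by rewrite cardsE (card_uniqP s_uniq).
Qed.

Lemma meets_every_kset (A : {set T}) k :
  [forall X : {set T}, (#|X| == k) ==> (X :&: A != set0)] = (#|T| < #|A| + k).
Proof.
apply/forallP/idP => [meet | large X].
  rewrite ltnNge; apply/negP => small.
  have [|X XAC cardX] := @exists_subset_card (~: A) k.
    by rewrite -(leq_add2l #|A|) cardsC.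
  by move: (meet X); rewrite cardX eqxx setI_eq0 disjoints_subset XAC.
apply/implyP => /eqP cardX; rewrite setI_eq0 disjoints_subset.
apply/negP => /subset_leq_card.
by rewrite cardX -(leq_add2l #|A|) cardsC leqNgt large.
Qed.

End Transversals.

Section HatTransversals.

Variables (T : finType) (E : {set {set T}}) (k : nat).

Definition cone (A : {set T}) : {set option T} := Some @: A :|: [set None].

Lemma None_notin_imset (A : {set T}) : None \notin Some @: A.
Proof. by apply/imsetP => -[]. Qed.

Lemma Some_imsetI (A : {set T}) (S : {set option T}) :
  Some @: A :&: S = Some @: (A :&: Some @^-1: S).
Proof.
apply/setP => -[t|]; last by rewrite inE !(negbTE (None_notin_imset _)).
by rewrite inE !(mem_imset _ _ Some_inj) !inE.
Qed.

Lemma cone_meet (A : {set T}) (S : {set option T}) :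
  (cone A :&: S != set0) = (None \in S) || (A :&: Some @^-1: S != set0).
Proof.
rewrite setIUl setU_eq0 [X in _ && X]setI_eq0 disjoints1 Some_imsetI imset_eq0.
by rewrite negb_and negbK orbC.
Qed.

Lemma preimset_cone (A : {set T}) : Some @^-1: cone A = A.
Proof. by apply/setP => t; rewrite !inE (mem_imset _ _ Some_inj) orbF. Qed.

Lemma cone_preimset (S : {set option T}) :
  None \in S -> cone (Some @^-1: S) = S.
Proof.
move=> NS; apply/setP => -[t|]; last by rewrite !inE NS orbT.
by rewrite !inE (mem_imset _ _ Some_inj) orbF inE.
Qed.

Lemma card_preimset_Some (S : {set option T}) : #|Some @^-1: S| <= #|S|.
Proof.
rewrite -(card_imset _ Some_inj); apply: subset_leq_card.
by apply/subsetP => y /imsetP[t]; rewrite inE => St ->.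
Qed.

Lemma is_transversal_hatH (S : {set option T}) :
  is_transversal (hatH E k) S =
  is_transversal E (Some @^-1: S) &&
  ((None \in S) || (#|T| < #|Some @^-1: S| + k)).
Proof.
rewrite is_transversalU !is_transversal_imset -meets_every_kset.
congr (_ && _).
  by apply: eq_forallb => e; rewrite Some_imsetI imset_eq0.
case: (boolP (None \in S)) => NS /=.
  by apply/forall_inP => X _; rewrite cone_meet NS.
by apply: eq_forallb => X; rewrite inE (cone_meet X S) (negbTE NS).
Qed.

Lemma hatH_transversal_None (S : {set option T}) :
  is_transversal (hatH E k) S -> #|Some @^-1: S| + k <= #|T| -> None \in S.
Proof.
rewrite is_transversal_hatH => /andP[_ /orP[// | large]].
by rewrite leqNgt large.
Qed.

Lemma cone_in_Tr_hatH (A : {set T}) :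
  #|A| + k <= #|T| -> (cone A \in Tr (hatH E k)) = (A \in Tr E).
Proof.
have cone_transversal B :
    is_transversal (hatH E k) (cone B) = is_transversal E B.
  by rewrite is_transversal_hatH preimset_cone in_setU set11 orbT andbT.
have cone_subset (B : {set T}) : B \subset A -> cone B \subset cone A.
  by move=> BA; rewrite setSU ?imsetS.
move=> small; rewrite !inE; apply/minsetP/minsetP => -[trA minA].
  split=> [|B trB BA]; first by rewrite -cone_transversal.
  by rewrite -(preimset_cone B) (minA (cone B)) ?preimset_cone ?cone_subset
             ?cone_transversal.
split=> [|S trS SA]; first by rewrite cone_transversal.
have preSA : Some @^-1: S \subset A by rewrite -(preimset_cone A) preimsetS.
have NS : None \in S.
  by apply: hatH_transversal_None; rewrite // (leq_trans _ small) ?leq_add2r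
             ?subset_leq_card.
rewrite -(cone_preimset NS) (minA (Some @^-1: S)) //.
by move: trS; rewrite is_transversal_hatH => /andP[].
Qed.

End HatTransversals.

Theorem proposition5 (T : finType) (n k : nat) (E : {set {set T}}) :
  #|T| = n ->
  exists J : {set {set option T}},
    (forall S, S \in J -> n + 1 <= #|S| + k) /\
    Tr (hatH E k) =
      [set ((@Some T) @: S) :|: [set None] | S : {set T} in [set S in Tr E | #|S| + k <= n]] :|: J.
Proof.
move=> <-; exists [set S in Tr (hatH E k) | #|T| < #|S| + k].
split=> [S|]; first by rewrite inE addn1 => /andP[].
set small_cones := imset _ _.
have small_cones_Tr S : S \in small_cones -> S \in Tr (hatH E k).
  case/imsetP => A; rewrite inE => /andP[AE small] ->.
  by rewrite cone_in_Tr_hatH.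
apply/setP => S; rewrite in_setU inE.
case: (ltnP #|T| (#|S| + k)) => [_ | small]; rewrite ?andbT ?andbF ?orbF.
  by rewrite (orb_idl (small_cones_Tr S)).
apply/idP/idP => [STr | /small_cones_Tr //].
have small_pre : #|Some @^-1: S| + k <= #|T|.
  by rewrite (leq_trans _ small) ?leq_add2r ?card_preimset_Some.
have NS : None \in S.
  move: STr; rewrite inE => /minsetP[trS _].
  exact: hatH_transversal_None trS small_pre.
apply/imsetP; exists (Some @^-1: S); last by rewrite -[LHS](cone_preimset NS).
by rewrite inE small_pre andbT -(cone_in_Tr_hatH E small_pre) cone_preimset.
Qed.
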